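(* Let $K$ be a field of characteristic $p>0$ with $\dim_{K^p}K<\infty$, and let $(W_n)_{n\ge0}$ be a power tower on $K$. Then all degrees $[W_{n-1}:W_n]$ are finite and $$[K:W_1]\ \ge\ [W_1:W_2]\ \ge\ [W_2:W_3]\ \ge\ \cdots\ \ge\ 1 .$$
   Context: For a field $K$ of characteristic $p>0$ and $n\ge0$, $K^{p^n}=\{x^{p^n}:x\in K\}$. For subfields $A,B\subset K$, $A\cdot B$ denotes their composite. A power tower on $K$ is a sequence of subfields $W_0,W_1,W_2,\ldots$ of $K$ such that $W_j=W_i\cdot K^{p^j}$ for all $0\le j\le i$ (in particular $W_0=K$ and $K^{p^n}\subset W_n\subset W_{n-1}$). *)

From HB Require Import structures.
From mathcomp Require Import all_boot all_order all_algebra.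
Set Implicit Arguments. Unset Strict Implicit. Unset Printing Implicit Defensive.
Import GRing.Theory.
Local Open Scope ring_scope.

Definition is_subfield (K : fieldType) (S : K -> Prop) : Prop :=
  [/\ S 0, S 1,
      (forall x y, S x -> S y -> S (x - y)),
      (forall x y, S x -> S y -> S (x * y)) &
      (forall x, S x -> S x^-1)].

Definition Kpow (K : fieldType) (p n : nat) : K -> Prop :=
  fun x => exists y : K, x = y ^+ (p ^ n).

Definition composite (K : fieldType) (A B : K -> Prop) : K -> Prop :=
  fun x => forall S : K -> Prop, is_subfield S ->
    (forall a, A a -> S a) -> (forall b, B b -> S b) -> S x.

Definition power_tower (K : fieldType) (p : nat) (W : nat -> K -> Prop) : Prop :=
  (forall i, is_subfield (W i)) /\
  (forall i j, (j <= i)%N -> forall x, W j x <-> composite (W i) (Kpow p j) x).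

Definition has_degree (K : fieldType) (A B : K -> Prop) (d : nat) : Prop :=
  exists s : seq K, [/\ size s = d,
    (forall i, (i < d)%N -> A s`_i),
    (forall c : seq K, size c = d -> (forall i, (i < d)%N -> B c`_i) ->
        \sum_(i < d) c`_i * s`_i = 0 -> forall i, (i < d)%N -> c`_i = 0) &
    (forall a, A a -> exists c : seq K, [/\ size c = d,
        (forall i, (i < d)%N -> B c`_i) & a = \sum_(i < d) c`_i * s`_i])].

Definition finite_degree (K : fieldType) (A B : K -> Prop) : Prop :=
  exists d, has_degree A B d.

From HB Require Import structures.
From mathcomp Require Import all_boot all_order all_algebra.
From mathcomp Require Import ring zify.
From Stdlib Require Import Classical IndefiniteDescription.
Set Implicit Arguments. Unset Strict Implicit. Unset Printing Implicit Defensive.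
Import GRing.Theory.
Local Open Scope ring_scope.

(* If s_1, ..., s_d span W_n over W_(n+1), then s_1^p, ..., s_d^p span W_(n+1) over
   W_(n+2): their W_(n+2)-span contains the p-th powers of W_n, hence is a subfield
   containing W_(n+2) and K^(p^(n+1)), hence contains the composite W_(n+1).
   Starting from [K : K^p] < oo (and K^p inside W_1), the finiteness of every
   [W_n : W_(n+1)] and the inequalities [W_(n+1) : W_(n+2)] <= [W_n : W_(n+1)]
   then follow from the Steinitz exchange lemma over subfields of K. *)

Section LinearAlgebraOverSubfield.
Variables (K : fieldType) (B : K -> Prop).
Hypothesis subB : is_subfield B.

Lemma subfield0 : B 0. Proof. by case: subB. Qed.
Lemma subfield1 : B 1. Proof. by case: subB. Qed.
Lemma subfieldB x y : B x -> B y -> B (x - y). Proof. by case: subB => _ _ h _ _; apply: h. Qed.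
Lemma subfieldM x y : B x -> B y -> B (x * y). Proof. by case: subB => _ _ _ h _; apply: h. Qed.
Lemma subfieldV x : B x -> B x^-1. Proof. by case: subB => _ _ _ _ h; apply: h. Qed.

Lemma subfieldN x : B x -> B (- x).
Proof. by move=> Bx; rewrite -sub0r; apply: subfieldB => //; apply: subfield0. Qed.

Lemma subfieldD x y : B x -> B y -> B (x + y).
Proof. by move=> Bx By; rewrite -[y]opprK; apply/subfieldB/subfieldN. Qed.

Lemma subfield_sum n (F : 'I_n -> K) : (forall i, B (F i)) -> B (\sum_(i < n) F i).
Proof. by move=> BF; apply: big_ind => //; [exact: subfield0 | exact: subfieldD]. Qed.

Lemma subfieldX x n : B x -> B (x ^+ n).
Proof.
move=> Bx; elim: n => [|n IHn]; first by rewrite expr0; exact: subfield1.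
by rewrite exprS; exact: subfieldM.
Qed.

Definition span_over (g : nat -> K) n x :=
  exists2 c : nat -> K, (forall i, (i < n)%N -> B (c i)) & x = \sum_(i < n) c i * g i.

Definition free_over (t : nat -> K) m := forall c : nat -> K,
  (forall i, (i < m)%N -> B (c i)) -> \sum_(i < m) c i * t i = 0 ->
  forall i, (i < m)%N -> c i = 0.

Definition basis_over (A : K -> Prop) (s : nat -> K) k :=
  [/\ forall i, (i < k)%N -> A (s i), free_over s k & forall a, A a -> span_over s k a].

Section Span.
Variables (g : nat -> K) (n : nat).

Lemma span_over0 : span_over g n 0.
Proof.
by exists (fun=> 0) => [i _|]; [exact: subfield0 | rewrite big1 // => i _; rewrite mul0r].
Qed.

Lemma span_overD x y : span_over g n x -> span_over g n y -> span_over g n (x + y).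
Proof.
move=> [c Bc ->] [e Be ->]; exists (fun i => c i + e i) => [i lt_in|].
  by apply: subfieldD; [apply: Bc | apply: Be].
by rewrite -big_split; apply: eq_bigr => i _; rewrite mulrDl.
Qed.

Lemma span_overZ b x : B b -> span_over g n x -> span_over g n (b * x).
Proof.
move=> Bb [c Bc ->]; exists (fun i => b * c i) => [i lt_in|].
  by apply: subfieldM => //; apply: Bc.
by rewrite mulr_sumr; apply: eq_bigr => i _; rewrite mulrA.
Qed.

Lemma span_overB x y : span_over g n x -> span_over g n y -> span_over g n (x - y).
Proof.
move=> Vx Vy; rewrite -mulN1r; apply: span_overD => //.
by apply: span_overZ => //; apply/subfieldN/subfield1.
Qed.

Lemma span_over_sum m (F : 'I_m -> K) :
  (forall i, span_over g n (F i)) -> span_over g n (\sum_(i < m) F i).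
Proof. by move=> VF; apply: big_ind => //; [exact: span_over0 | exact: span_overD]. Qed.

Lemma span_overM x y :
  (forall i j, (i < n)%N -> (j < n)%N -> span_over g n (g i * g j)) ->
  span_over g n x -> span_over g n y -> span_over g n (x * y).
Proof.
move=> Vgg [c Bc ->] [e Be ->]; rewrite mulr_suml; apply: span_over_sum => i.
rewrite mulr_sumr; apply: span_over_sum => j.
rewrite mulrACA; apply: span_overZ; last exact: Vgg.
by apply: subfieldM; [apply: Bc | apply: Be].
Qed.

End Span.

Lemma span_over_cons (u : nat -> K) n x : span_over u n.+1 x ->
  exists2 c0, B c0 & span_over (fun i => u i.+1) n (x - c0 * u 0%N).
Proof.
move=> [c Bc ->]; exists (c 0%N); first exact: Bc.
exists (fun i => c i.+1) => [i lt_in|]; first exact: Bc.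
by rewrite big_ord_recl addrC addKr.
Qed.

Lemma not_free_over t m : ~ free_over t m ->
  exists c : nat -> K, [/\ forall i, (i < m)%N -> B (c i),
    \sum_(i < m) c i * t i = 0 & exists2 i, (i < m)%N & c i != 0].
Proof.
move=> not_free; apply: NNPP => no_relation; apply: not_free => c Bc sum0 i lt_im.
by apply: NNPP => /eqP ci_neq0; apply: no_relation; exists c; split => //; exists i.
Qed.

Lemma free_over_elim m (t : nat -> K) (k : 'I_m.+1) (r : nat -> K) :
  (forall j, (j < m)%N -> B (r j)) -> free_over t m.+1 ->
  free_over (fun j => t (bump k j) - r j * t k) m.
Proof.
move=> Br free_t c Bc sum0.
pose c' i := if i == k :> nat then - \sum_(j < m) c j * r j else c (unbump k i).
have c'_bump j : c' (bump k j) = c j by rewrite /c' eq_sym (negbTE (neq_bump _ _)) bumpK.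
have Bc' i : (i < m.+1)%N -> B (c' i).
  rewrite /c'; case: eqP => [_ _ | neq_ik lt_im].
    by apply/subfieldN/subfield_sum => j; apply: subfieldM; [apply: Bc | apply: Br].
  by apply: Bc; move: lt_im neq_ik (ltn_ord k); rewrite /unbump; case: ltnP => /=; lia.
have relation : \sum_(i < m.+1) c' i * t i = 0.
  rewrite (bigD1_ord k) //= {1}/c' eqxx.
  under eq_bigr => j _ do rewrite c'_bump.
  rewrite -[RHS]sum0.
  under [RHS]eq_bigr => j _ do rewrite mulrBr mulrA.
  by rewrite sumrB -mulr_suml mulNr addrC.
move=> j lt_jm; rewrite -c'_bump; apply: free_t Bc' relation _ _.
exact: (ltn_ord (lift k (Ordinal lt_jm))).
Qed.

Lemma free_over_le_span n (u t : nat -> K) m :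
  (forall j, (j < m)%N -> span_over u n (t j)) -> free_over t m -> (m <= n)%N.
Proof.
elim: n u t m => [|n IHn] u t [|m] t_span free_t //.
  have t_eq0 j : (j < m.+1)%N -> t j = 0 by move=> /t_span [c _ ->]; rewrite big_ord0.
  have sum0 : \sum_(i < m.+1) 1 * t i = 0 by rewrite big1 // => i _; rewrite t_eq0 ?mulr0.
  have := free_t (fun=> 1) (fun i _ => subfield1) sum0 0%N (ltn0Sn m).
  by move=> /eqP; rewrite oner_eq0.
have [c0 c0P] : exists c0 : nat -> K, forall j, (j < m.+1)%N ->
    B (c0 j) /\ span_over (fun i => u i.+1) n (t j - c0 j * u 0%N).
  apply: (functional_choice (fun j c => (j < m.+1)%N ->
    B c /\ span_over (fun i => u i.+1) n (t j - c * u 0%N))) => j.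
  case: (ltnP j m.+1) => [/t_span/span_over_cons [c Bc Vc] | _]; first by exists c.
  by exists 0.
case: (boolP [exists k : 'I_m.+1, c0 k != 0]) => [/existsP [k c0k_neq0] | /existsPn c0_eq0].
  (* Eliminating t_k removes u_0 from the spans of the remaining vectors. *)
  pose r j := c0 (bump k j) / c0 k.
  have lt_bump j : (j < m)%N -> (bump k j < m.+1)%N :=
    fun lt_jm => ltn_ord (lift k (Ordinal lt_jm)).
  have [Bc0k Vk] := c0P k (ltn_ord k).
  have Br j : (j < m)%N -> B (r j).
    by move=> /lt_bump /c0P [Bc0j _]; apply: subfieldM => //; apply: subfieldV.
  rewrite ltnS; apply: (IHn _ (fun j => t (bump k j) - r j * t k));
    last exact: free_over_elim Br free_t.
  move=> j lt_jm; have [_ Vj] := c0P _ (lt_bump j lt_jm).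
  have -> : t (bump k j) - r j * t k
      = (t (bump k j) - c0 (bump k j) * u 0%N) - r j * (t k - c0 k * u 0%N).
    by rewrite mulrBr mulrA divfK //; ring.
  by apply: span_overB Vj _; apply: span_overZ Vk; apply: Br.
apply/leqW/(IHn (fun i => u i.+1) t) => // j lt_jm; have [_] := c0P j lt_jm.
by move/negPn/eqP: (c0_eq0 (Ordinal lt_jm)) => /= ->; rewrite mul0r subr0.
Qed.

Lemma span_over_of_not_free k (s : nat -> K) a : free_over s k ->
  ~ free_over (fun i => if i == k then a else s i) k.+1 -> span_over s k a.
Proof.
move=> free_s /not_free_over [c [Bc]]; rewrite big_ord_recr /= eqxx.
under eq_bigr => i _ do rewrite (ltn_eqF (ltn_ord i)).
move=> relation [i lt_ik ci_neq0].
have ck_neq0 : c k != 0.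
  apply: contra_neq ci_neq0 => ck_eq0; move: relation; rewrite ck_eq0 mul0r addr0 => sum0.
  have [lt_ik' | le_ki] := ltnP i k.
    exact: free_s (fun j lt_jk => Bc j (ltnW lt_jk)) sum0 _ lt_ik'.
  by have -> : i = k by apply/eqP; rewrite eqn_leq -ltnS lt_ik le_ki.
exists (fun i => - (c i / c k)) => [j lt_jk|].
  by apply/subfieldN/subfieldM; [apply: Bc; apply: ltnW | apply/subfieldV/Bc].
under eq_bigr => j _ do rewrite mulNr mulrAC.
rewrite sumrN -mulr_suml; move/eqP: relation; rewrite addr_eq0 => /eqP ->.
by rewrite mulNr opprK mulrAC divff // mul1r.
Qed.

Lemma exists_maximal (P : nat -> Prop) n :
  P 0%N -> (forall k, P k -> (k <= n)%N) -> exists k, P k /\ ~ P k.+1.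
Proof.
move=> P0 bounded; apply: NNPP => no_max.
suff Pk k : P k by have := bounded _ (Pk n.+1); rewrite ltnn.
by elim: k => // k Pk; apply: NNPP => not_Pk1; apply: no_max; exists k.
Qed.

(* A maximal free family inside [A] spans it; finite spanning bounds its size. *)
Lemma exists_basis_over (A : K -> Prop) g n :
  (forall a, A a -> span_over g n a) -> exists k s, basis_over A s k.
Proof.
move=> A_span.
pose P k := exists2 s, (forall i, (i < k)%N -> A (s i)) & free_over s k.
have [k [[s As free_s] not_Pk1]] : exists k, P k /\ ~ P k.+1.
  apply: (@exists_maximal P n) => [|k [s As free_s]].
    by exists (fun=> 0) => // c _ _ i; rewrite ltn0.
  exact: free_over_le_span (fun j lt_jk => A_span _ (As j lt_jk)) free_s.
exists k, s; split => // a Aa; apply: span_over_of_not_free free_s _ => free_ext.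
apply: not_Pk1; exists (fun i => if i == k then a else s i) => // i.
by case: eqP => // /eqP neq_ik; rewrite ltnS leq_eqVlt (negbTE neq_ik) => /As.
Qed.

Lemma has_degreeP (A : K -> Prop) k : has_degree A B k <-> exists s, basis_over A s k.
Proof.
split=> [[s [_ As free_s s_span]] | [s [As free_s s_span]]].
  exists (nth 0 s); split => // [c Bc sum0 i lt_ik | a /s_span [c [_ Bc ->]]].
    have := free_s (mkseq c k) (size_mkseq _ _) _ _ i lt_ik; rewrite nth_mkseq //; apply.
      by move=> j lt_jk; rewrite nth_mkseq //; apply: Bc.
    by rewrite -[RHS]sum0; apply: eq_bigr => j _; rewrite nth_mkseq.
  by exists (nth 0 c).
exists (mkseq s k); split => [|i lt_ik|c _ Bc sum0 i lt_ik|a /s_span [c Bc ->]].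
- exact: size_mkseq.
- by rewrite nth_mkseq //; apply: As.
- apply: (free_s (nth 0 c)) => //; rewrite -[RHS]sum0.
  by apply: eq_bigr => j _; rewrite nth_mkseq.
- exists (mkseq c k); split => [|j lt_jk|]; first exact: size_mkseq.
    by rewrite nth_mkseq //; apply: Bc.
  by apply: eq_bigr => j _; rewrite !nth_mkseq.
Qed.

Lemma finite_degree_of_span (A : K -> Prop) g n :
  (forall a, A a -> span_over g n a) -> finite_degree A B.
Proof. by move=> /exists_basis_over [k [s basis_s]]; exists k; apply/has_degreeP; exists s. Qed.

Lemma has_degree_le_span (A : K -> Prop) g n d :
  (forall a, A a -> span_over g n a) -> has_degree A B d -> (d <= n)%N.
Proof.
move=> A_span /has_degreeP [s [As free_s _]].
exact: free_over_le_span (fun j lt_jd => A_span _ (As j lt_jd)) free_s.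
Qed.

Lemma has_degree_gt0 (A : K -> Prop) d : A 1 -> has_degree A B d -> (0 < d)%N.
Proof.
case: d => // A1 /has_degreeP [s [_ _ /(_ 1 A1) [c _]]].
by rewrite big_ord0 => /eqP; rewrite oner_eq0.
Qed.

End LinearAlgebraOverSubfield.

Lemma span_over_sub (K : fieldType) (B B' : K -> Prop) g n x :
  (forall b, B b -> B' b) -> span_over B g n x -> span_over B' g n x.
Proof. by move=> subBB' [c Bc ->]; exists c => // i /Bc /subBB'. Qed.

Section PowerTower.
Variables (K : fieldType) (p : nat) (W : nat -> K -> Prop).
Hypothesis pcharK : p \in [pchar K].
Hypothesis tower : power_tower p W.

Lemma pchar_gt0 : (0 < p)%N. Proof. exact: prime_gt0 (pcharf_prime pcharK). Qed.

Lemma tower_subfield n : is_subfield (W n). Proof. by case: tower. Qed.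

Lemma tower_ind n (S : K -> Prop) : is_subfield S ->
  (forall x, W n.+1 x -> S x) -> (forall x, Kpow p n x -> S x) -> forall x, W n x -> S x.
Proof. by case: tower => _ eqW subS WS KS x /(eqW _ _ (leqnSn n)); apply. Qed.

Lemma Kpow_sub_tower n x : Kpow p n x -> W n x.
Proof. by case: tower => _ eqW Kx; apply/(eqW _ _ (leqnn n)) => S _ _; apply. Qed.

Lemma tower_succ_sub n x : W n.+1 x -> W n x.
Proof. by case: tower => _ eqW Wx; apply/(eqW _ _ (leqnSn n)) => S _ WS _; apply: WS. Qed.

Lemma exprp_sum_mul n (c g : nat -> K) :
  (\sum_(i < n) c i * g i) ^+ p = \sum_(i < n) c i ^+ p * g i ^+ p.
Proof.
rewrite -(pFrobenius_autE pcharK) rmorph_sum; apply: eq_bigr => i _.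
by rewrite rmorphM /= !pFrobenius_autE.
Qed.

(* [{y | y^p \in W_(n+1)}] is a subfield containing [W_(n+1)] and [K^(p^n)], hence [W_n]. *)
Lemma tower_frobenius n x : W n x -> W n.+1 (x ^+ p).
Proof.
have subW := tower_subfield n.+1.
apply: (tower_ind (S := fun y => W n.+1 (y ^+ p))).
- split=> [||a b Wa Wb|a b Wa Wb|a Wa].
  + by rewrite expr0n eqn0Ngt pchar_gt0; apply: subfield0.
  + by rewrite expr1n; apply: subfield1.
  + by rewrite -!(pFrobenius_autE pcharK) rmorphB; apply: subfieldB.
  + by rewrite exprMn; apply: subfieldM.
  + by rewrite exprVn; apply: subfieldV.
- by move=> a Wa; apply: subfieldX.
- by move=> a [y ->]; apply: Kpow_sub_tower; exists y; rewrite -exprM expnSr.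
Qed.

Section FrobeniusSpan.
Variables (n d : nat) (s : nat -> K).
Hypothesis s_in : forall i, (i < d)%N -> W n (s i).
Hypothesis s_span : forall a, W n a -> span_over (W n.+1) s d a.

Local Notation V := (span_over (W n.+2) (fun i => s i ^+ p) d).

Lemma span_frobenius x : W n x -> V (x ^+ p).
Proof.
move=> /s_span [c Wc ->]; rewrite exprp_sum_mul.
by exists (fun i => c i ^+ p) => // i /Wc /tower_frobenius.
Qed.

Lemma span_frobenius_sub x : V x -> W n.+1 x.
Proof.
move=> [c Wc ->]; apply: (subfield_sum (tower_subfield _)) => i.
apply: (subfieldM (tower_subfield _)); first exact/tower_succ_sub/Wc.
exact/tower_frobenius/s_in.
Qed.

Lemma span_frobenius_subfield : is_subfield V.
Proof.
have subW := tower_subfield n.+2.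
have V1 : V 1 by rewrite -(expr1n _ p); apply: span_frobenius; apply: subfield1 (tower_subfield n).
have VM x y : V x -> V y -> V (x * y).
  apply: span_overM => // i j lt_id lt_jd; rewrite -exprMn.
  by apply/span_frobenius/(subfieldM (tower_subfield n)); apply: s_in.
split=> // [|x y|x Vx]; [exact: span_over0 | exact: span_overB |].
have [-> | x_neq0] := eqVneq x 0; first by rewrite invr0; apply: span_over0.
(* [x^-1 = (x^p)^-1 * x^(p-1)], and [x^p] lies in [W_(n+2)]. *)
have -> : x^-1 = (x ^+ p)^-1 * x ^+ p.-1.
  by rewrite -{1}(prednK pchar_gt0) exprS invfM mulfVK // expf_neq0.
apply: span_overZ => //; first by apply: (subfieldV subW); apply/tower_frobenius/span_frobenius_sub.
by elim: p.-1 => [|k IHk]; rewrite ?expr0 // exprS; apply: VM.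
Qed.

Lemma tower_span_frobenius x : W n.+1 x -> V x.
Proof.
have [_ V1 _ _ _] := span_frobenius_subfield.
apply: (tower_ind span_frobenius_subfield) => [b Wb | y [z ->]].
  by rewrite -[b]mulr1; apply: (span_overZ (tower_subfield n.+2)).
by rewrite expnSr exprM; apply/span_frobenius/Kpow_sub_tower; exists z.
Qed.

End FrobeniusSpan.
End PowerTower.

Theorem mainTheorem2 (K : fieldType) (p : nat) (W : nat -> K -> Prop) :
  p \in [pchar K]%R ->
  finite_degree (fun _ : K => True) (Kpow p 1) ->
  power_tower p W ->
  (forall n, finite_degree (W n) (W n.+1)) /\
  (forall n d, has_degree (W n) (W n.+1) d -> (1 <= d)%N) /\
  (forall n d d', has_degree (W n) (W n.+1) d ->
     has_degree (W n.+1) (W n.+2) d' -> (d' <= d)%N).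
Proof.
move=> pcharK [e /has_degreeP [g [_ _ g_span]]] tower.
have subW := tower_subfield tower.
split; last split.
- elim=> [|n [d /has_degreeP [s [s_in _ s_span]]]].
    apply: (@finite_degree_of_span _ _ (subW 1%N) _ g e) => a _.
    exact: span_over_sub (Kpow_sub_tower tower (n := 1)) (g_span a I).
  exact: (finite_degree_of_span (subW n.+2) (tower_span_frobenius pcharK tower s_in s_span)).
- by move=> n d; apply: has_degree_gt0; apply: subfield1.
- move=> n d d' /has_degreeP [s [s_in _ s_span]].
  exact: (has_degree_le_span (subW n.+2) (tower_span_frobenius pcharK tower s_in s_span)).
Qed.
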